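(* For every $\varepsilon>0$ there exists $N\in\mathbb{N}$ such that the following holds for every $N$-partitioned hypergraph $H$ and every choice of vertices $\gamma^1_{ij},\gamma^2_{ij}\in V_{ij}$, $i<j$, $i,j\in[N]$. There exist $n\in\mathbb{N}$, $k\in[n-2]$ and an $n$-partitioned subhypergraph $H_0$ of $H$ with index set $I=\{i_1,\ldots,i_n\}\subseteq[N]$, $i_1<\cdots<i_n$, such that: (a) every triad other than the $(i_k,i_{k+1},i_{k+2})$-triad is the same in $H_0$ and in $H$; (b) the degree of every top vertex of the $(i_k,i_{k+1},i_{k+2})$-triad in $H_0$ is smaller by at most $\varepsilon$ than its degree in $H$; (c) every right neighbor of $\gamma^1_{i_ki_{k+2}}$ in the $(i_k,i_{k+1},i_{k+2})$-triad of $H_0$ is also a right neighbor of $\gamma^1_{i_ji_{k+2}}$ in the $(i_j,i_{k+1},i_{k+2})$-triad for some $j<k$; (d) every left neighbor of $\gamma^2_{i_ki_{k+2}}$ in the $(i_k,i_{k+1},i_{k+2})$-triad of $H_0$ is also a left neighbor of $\gamma^2_{i_ki_j}$ in the $(i_k,i_{k+1},i_j)$-triad for some $j>k+2$.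
   Context: An $n$-partitioned hypergraph $H$ is a finite $3$-uniform hypergraph whose vertex set is partitioned into nonempty sets $V_{ij}$, $1\le i<j\le n$, such that every edge has, for some $1\le i<j<k\le n$, exactly one vertex in each of $V_{ij}$, $V_{ik}$, $V_{jk}$; the set of such edges is the $(i,j,k)$-triad, and the vertices of $V_{ik}$ are its top vertices. The degree of $v\in V_{ik}$ in the $(i,j,k)$-triad is the number of edges of the triad containing $v$ divided by $|V_{ij}||V_{jk}|$. For $v\in V_{ik}$, a left neighbor (right neighbor) of $v$ in the $(i,j,k)$-triad is a vertex of $V_{ij}$ (of $V_{jk}$) contained together with $v$ in an edge of that triad. For $I\subseteq[n]$, the induced subhypergraph with index set $I$ has parts $V_{ij}$, $i<j$, $i,j\in I$ (indexed by elements of $I$) and all edges of $H$ inside these parts; a subhypergraph is obtained from an induced subhypergraph by deleting some edges, and has the same index set. *)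

From HB Require Import structures.
From mathcomp Require Import all_boot all_order all_algebra.
From mathcomp Require Import reals.
Set Implicit Arguments. Unset Strict Implicit. Unset Printing Implicit Defensive.
Import Order.TTheory GRing.Theory Num.Theory.

(* Indices are 0-based: the index set [N] is {0,...,N-1}.
   A vertex v lies in the part V_{ij} with (i,j) = part v. *)
Section Hyp.
Variable T : finType.
Variable part : T -> nat * nat.

Definition Vpart (i j : nat) : {set T} := [set v | part v == (i, j)].

Definition triadb (e : {set T}) (i j k : nat) : bool :=
  [&& i < j, j < k, #|e| == 3,
      #|e :&: Vpart i j| == 1, #|e :&: Vpart i k| == 1 &
      #|e :&: Vpart j k| == 1].

Definition partitioned_hypergraph (N : nat) (E : {set {set T}}) : Prop :=
  [/\ forall v, (part v).1 < (part v).2 < N,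
      forall i j, i < j < N -> exists v, part v = (i, j) &
      forall e, e \in E -> exists i j k, k < N /\ triadb e i j k].

Definition subhypergraph (s : seq nat) (E E0 : {set {set T}}) : Prop :=
  E0 \subset E /\
  forall e, e \in E0 ->
    exists a b c, [/\ a \in s, b \in s, c \in s & triadb e a b c].

Definition deg (R : realType) (E : {set {set T}}) (v : T) (i j k : nat) : R :=
  (#|[set e in E | (v \in e) && triadb e i j k]|)%:R /
  (#|Vpart i j| * #|Vpart j k|)%:R.

Definition right_nb (E : {set {set T}}) (v w : T) (i j k : nat) : bool :=
  [exists e in E, [&& triadb e i j k, v \in e, w \in e & w \in Vpart j k]].
Definition left_nb (E : {set {set T}}) (v w : T) (i j k : nat) : bool :=
  [exists e in E, [&& triadb e i j k, v \in e, w \in e & w \in Vpart i j]].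
End Hyp.
Arguments deg {T} part {R} E v i j k.

(* Fix the middle index m = 2t + 1, where t >= 1/c and c = eps/2, and look at the
   triads (p, m, 2m - r) with p, r < m.  For fixed r, the right neighbours of
   g1_{p,2m-r} that are not right neighbours of any g1_{j,2m-r} with j < p are
   pairwise disjoint subsets of V_{m,2m-r}, so for all but t values of p they
   make up at most a c-fraction of it; symmetrically for the new left neighbours
   of g2_{p,2m-r} relative to the triads (p, m, 2m - i), i < r.  Since 2t < m,
   some pair (p, r) is good for both.  On the index set
   {0,..,p} u {m} u {2m-r,..,2m} with k = p, delete from the special triad the
   edges through g1 (resp. g2) whose right (resp. left) vertex is new: every top
   vertex loses at most 2c |V_pm| |V_{m,2m-r}| edges, while every surviving
   neighbour of g1 or g2 is a neighbour in an earlier (resp. later) triad, which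
   is left intact. *)

From HB Require Import structures.
From mathcomp Require Import all_boot all_order all_algebra.
From mathcomp Require Import reals.
From mathcomp Require Import zify lra.
Import Order.TTheory GRing.Theory Num.Theory.
Set Implicit Arguments. Unset Strict Implicit. Unset Printing Implicit Defensive.

Section Triads.
Variables (T : finType) (part : T -> nat * nat).

Lemma triad_vertices e a b c : triadb part e a b c ->
  exists l v r, [/\ e = [set l; v; r], part l = (a, b), part v = (a, c) &
                    part r = (b, c)].
Proof.
case/and5P=> ab bc /eqP e3 /cards1P[l el] /andP[/cards1P[v ev] /cards1P[r er]].
have singleton_part i j x :
    e :&: Vpart part i j = [set x] -> x \in e /\ part x = (i, j).
  by move=> exij; have := set11 x; rewrite -exij !inE => /andP[-> /eqP].
have [le pl] := singleton_part _ _ _ el; have [ve pv] := singleton_part _ _ _ ev.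
have [re pr] := singleton_part _ _ _ er.
exists l, v, r; split=> //; apply/eqP; rewrite eq_sym eqEcard.
have -> : [set l; v; r] \subset e.
  by apply/subsetP=> x; rewrite !inE => /orP[/orP[]|] /eqP->.
have neq x y : part x != part y -> x != y by apply: contraNneq => ->.
have lv : l != v by apply: neq; rewrite pl pv; apply/eqP=> -[]; lia.
have lr : l != r by apply: neq; rewrite pl pr; apply/eqP=> -[]; lia.
have vr : v != r by apply: neq; rewrite pv pr; apply/eqP=> -[]; lia.
by rewrite e3 -setUA cardsU1 cards2 vr !inE negb_or lv lr.
Qed.

Lemma triad_top_vertex e a b c v : triadb part e a b c -> v \in e ->
  part v = (a, c) ->
  exists l r, [/\ e = [set l; v; r], part l = (a, b) & part r = (b, c)].
Proof.
move=> te ve pv; have /and3P[ab bc _] := te.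
have [l [v' [r [def_e pl pv' pr]]]] := triad_vertices te.
exists l, r; split=> //; rewrite def_e.
move: ve; rewrite def_e !inE => /orP[/orP[]|] /eqP vE.
- by move: pv; rewrite vE pl => -[]; lia.
- by rewrite vE.
- by move: pv; rewrite vE pr => -[]; lia.
Qed.

Lemma triad_indices_uniq e a b c a' b' c' :
  triadb part e a b c -> triadb part e a' b' c' -> (a, b, c) = (a', b', c').
Proof.
move=> te te'; have /and5P[ab bc _ hab /andP[hac hbc]] := te.
have /and3P[ab' bc' _] := te'.
have [l [v [r [def_e pl pv pr]]]] := triad_vertices te'.
have hit i j : #|e :&: Vpart part i j| == 1 ->
    [|| (i, j) == (a', b'), (i, j) == (a', c') | (i, j) == (b', c')].
  case/cards1P=> x exij; have := set11 x; rewrite -exij def_e !inE.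
  by case/andP=> /orP[/orP[]|] /eqP-> /eqP<-; rewrite ?pl ?pv ?pr eqxx ?orbT.
move: (hit _ _ hab) (hit _ _ hac) (hit _ _ hbc).
rewrite !xpair_eqE => ab_hit ac_hit bc_hit.
by apply/eqP; rewrite !xpair_eqE; lia.
Qed.

Lemma card_triad_edges_through a b c v (X Y : {set T}) : part v = (a, c) ->
  #|[set e | [&& triadb part e a b c, v \in e,
                 e :&: Vpart part a b \subset X & e :&: Vpart part b c \subset Y]]|
  <= #|X| * #|Y|.
Proof.
move=> pv; rewrite -cardsX.
apply: leq_trans (leq_imset_card (fun x => [set x.1; v; x.2]) _).
apply/subset_leq_card/subsetP=> e; rewrite inE => /and4P[te ve eX eY].
have [l [r [def_e pl pr]]] := triad_top_vertex te ve pv.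
apply/imsetP; exists (l, r); last by [].
rewrite inE /=; apply/andP; split.
- by apply: (subsetP eX); rewrite def_e !inE eqxx pl eqxx.
- by apply: (subsetP eY); rewrite def_e !inE eqxx pr eqxx orbT.
Qed.

Lemma right_nb_Vpart (E : {set {set T}}) v w i j k :
  right_nb part E v w i j k -> w \in Vpart part j k.
Proof. by case/exists_inP=> e _ /and4P[]. Qed.

Lemma left_nb_Vpart (E : {set {set T}}) v w i j k :
  left_nb part E v w i j k -> w \in Vpart part i j.
Proof. by case/exists_inP=> e _ /and4P[]. Qed.

Lemma right_nb_sub (E E0 : {set {set T}}) v w i j k :
  (forall e, e \in E -> triadb part e i j k -> e \in E0) ->
  right_nb part E v w i j k -> right_nb part E0 v w i j k.
Proof.
move=> EE0 /exists_inP[e eE /and4P[te ve we wV]].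
by apply/exists_inP; exists e; rewrite ?EE0 ?te ?ve ?we.
Qed.

Lemma left_nb_sub (E E0 : {set {set T}}) v w i j k :
  (forall e, e \in E -> triadb part e i j k -> e \in E0) ->
  left_nb part E v w i j k -> left_nb part E0 v w i j k.
Proof.
move=> EE0 /exists_inP[e eE /and4P[te ve we wV]].
by apply/exists_inP; exists e; rewrite ?EE0 ?te ?ve ?we.
Qed.

Lemma deg_diff_le (R : realType) (E E0 : {set {set T}}) v a b c n :
  E0 \subset E ->
  #|[set e in E :\: E0 | (v \in e) && triadb part e a b c]| <= n ->
  (deg part E v a b c - deg part E0 v a b c
    <= n%:R / (#|Vpart part a b| * #|Vpart part b c|)%:R :> R)%R.
Proof.
move=> E0E removed; rewrite /deg -mulrBl ler_wpM2r ?invr_ge0 ?ler0n //.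
rewrite lerBlDl -natrD ler_nat; apply: leq_trans (leq_add (leqnn _) removed).
apply: leq_trans (leq_card_setU _ _); apply/subset_leq_card/subsetP=> e.
rewrite !inE; case: (e \in E0) (subsetP E0E e) => [/(_ isT) -> | _] //=.
by rewrite orbF.
Qed.

Definition within_index (s : seq nat) (e : {set T}) : bool :=
  has (fun a => has (fun b => has (fun c => triadb part e a b c) s) s) s.

Lemma within_indexP s e :
  reflect (exists a b c, [/\ a \in s, b \in s, c \in s & triadb part e a b c])
          (within_index s e).
Proof.
apply: (iffP hasP) => [[a aS /hasP[b bS /hasP[c cS te]]] | [a [b [c [aS bS cS te]]]]].
  by exists a, b, c.
by exists a => //; apply/hasP; exists b => //; apply/hasP; exists c.
Qed.
End Triads.

Lemma sum_card_setD_bigcup (T : finType) (F : nat -> {set T}) n :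
  \sum_(i < n) #|F i :\: \bigcup_(j < i) F j| = #|\bigcup_(j < n) F j|.
Proof.
elim: n => [|n IH]; first by rewrite !big_ord0 cards0.
rewrite big_ord_recr /= IH [in RHS]big_ord_recr /=.
by rewrite -[RHS](cardsID (\bigcup_(j < n) F j)) setUK setDUl setDv set0U.
Qed.

Lemma markov_card (R : realFieldType) (I : finType) (d : I -> nat) (V t : nat)
    (c : R) :
  (0 < c)%R -> (1 <= c * t%:R)%R -> \sum_i d i <= V ->
  #|[set i | (c * V%:R < (d i)%:R)%R]| <= t.
Proof.
move=> c_gt0 ct sum_d; set B := [set i | _].
have [V0 | V_gt0] := posnP V.
  suff -> : B = set0 by rewrite cards0.
  apply/setP=> i; rewrite !inE V0 mulr0 ltr0n lt0n.
  by move: sum_d; rewrite V0 leqn0 sum_nat_eq0 => /forallP/(_ i)/eqP->.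
have sum_B : (#|B|%:R * (c * V%:R) <= V%:R :> R)%R.
  rewrite -sum1_card natr_sum mulr_suml.
  apply: (@le_trans _ _ (\sum_(i in B) (d i)%:R)%R).
    by apply: ler_sum => i; rewrite inE mul1r => /ltW.
  rewrite -natr_sum ler_nat; apply: leq_trans sum_d.
  by rewrite [leqRHS](bigID (mem B)) leq_addr.
rewrite -(ler_nat R) -(ler_pM2r c_gt0) [leRHS]mulrC (le_trans _ ct) //.
by rewrite -(ler_pM2r (ltr0Sn R V.-1)) prednK // mul1r -mulrA.
Qed.

Lemma exists_pair_avoiding m t (P Q : 'I_m -> 'I_m -> bool) : 2 * t < m ->
  (forall r, #|[set p | P p r]| <= t) -> (forall p, #|[set r | Q p r]| <= t) ->
  exists p r, ~~ P p r && ~~ Q p r.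
Proof.
move=> tm P_le Q_le.
have [[p r] /= ok | none] := pickP [pred x : 'I_m * 'I_m | ~~ P x.1 x.2 && ~~ Q x.1 x.2].
  by exists p, r.
have cover p : m <= #|[set r | P p r]| + #|[set r | Q p r]|.
  rewrite -[leqLHS]card_ord -cardsT; apply: leq_trans (leq_card_setU _ _).
  apply/subset_leq_card/subsetP=> r _; move: (none (p, r)); rewrite /= !inE.
  by move/negbT; rewrite negb_and !negbK.
have swap : \sum_(p < m) #|[set r | P p r]| = \sum_(r < m) #|[set p | P p r]|.
  rewrite (eq_bigr (fun p => \sum_(r | P p r) 1)); last first.
    by move=> p _; rewrite sum1dep_card.
  rewrite (exchange_big_dep predT) //=.
  by apply: eq_bigr => r _; rewrite sum1dep_card.
have : \sum_(p < m) m <= \sum_(p < m) (#|[set r | P p r]| + #|[set r | Q p r]|).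
  by apply: leq_sum => p _; apply: cover.
rewrite big_split /= swap => covered.
have : \sum_(r < m) #|[set p | P p r]| + \sum_(p < m) #|[set r | Q p r]|
         <= \sum_(r < m) t + \sum_(p < m) t.
  by apply: leq_add; apply: leq_sum.
rewrite !sum_nat_const card_ord in covered * => bound.
by exfalso; move: (leq_trans covered bound); nia.
Qed.

Section IndexSeq.
Variables p m r : nat.
Hypotheses (p_lt_m : p < m) (r_lt_m : r < m).

Definition index_seq := iota 0 p.+1 ++ m :: iota (2 * m - r) r.+1.

Lemma mem_index_seq a :
  (a \in index_seq) = [|| a <= p, a == m | 2 * m - r <= a <= 2 * m].
Proof. by rewrite mem_cat mem_iota in_cons mem_iota; lia. Qed.

Lemma index_seq_sorted : sorted ltn index_seq.
Proof.
rewrite sorted_pairwise; last exact: ltn_trans.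
rewrite pairwise_cat pairwise_cons -!sorted_pairwise ?iota_ltn_sorted ?andbT;
  try exact: ltn_trans.
apply/andP; split; last by apply/allP => b; rewrite mem_iota; lia.
by apply/allrelP => a b; rewrite mem_iota in_cons mem_iota; lia.
Qed.

Lemma index_seq_bounded : all (fun i => i < (2 * m).+1) index_seq.
Proof. by apply/allP => a; rewrite mem_index_seq; lia. Qed.

Lemma size_index_seq : size index_seq = p + r + 3.
Proof. by rewrite size_cat /= !size_iota; lia. Qed.

Lemma nth_index_seq_lo j : j <= p -> nth 0 index_seq j = j.
Proof. by move=> jp; rewrite nth_cat size_iota ltnS jp nth_iota. Qed.

Lemma nth_index_seq_mid : nth 0 index_seq p.+1 = m.
Proof. by rewrite nth_cat size_iota ltnn subnn. Qed.

Lemma nth_index_seq_hi i : i <= r -> nth 0 index_seq (p.+2 + (r - i)) = 2 * m - i.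
Proof.
move=> ir; rewrite nth_cat size_iota ifF; last lia.
have -> : p.+2 + (r - i) - p.+1 = (r - i).+1 by lia.
by rewrite -[nth _ _ _.+1]/(nth 0 (iota (2 * m - r) r.+1) (r - i)) nth_iota; lia.
Qed.

Lemma nth_index_seq_top : nth 0 index_seq p.+2 = 2 * m - r.
Proof. by have := nth_index_seq_hi (leqnn r); rewrite subnn addn0. Qed.
End IndexSeq.

Lemma cross_sum_div_le (R : realFieldType) (x y x' y' c : R) :
  (0 <= c -> 0 <= x -> 0 <= y -> x' <= c * x -> y' <= c * y ->
  (x * y' + x' * y) / (x * y) <= 2 * c)%R.
Proof.
move=> c_ge0 x_ge0 y_ge0 hx hy.
have [xy0 | xy_neq0] := eqVneq (x * y)%R 0%R.
  by rewrite xy0 invr0 mulr0 mulr_ge0.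
have xy_gt0 : (0 < x * y)%R by rewrite lt_def xy_neq0 mulr_ge0.
by rewrite ler_pdivrMr //; nra.
Qed.

Section Pruning.
Variables (T : finType) (part : T -> nat * nat) (E : {set {set T}}).
Variables (g1 g2 : nat -> nat -> T) (m : nat).
Local Notation far i := (2 * m - i).

Definition right_nbs r j := [set w | right_nb part E (g1 j (far r)) w j m (far r)].
Definition left_nbs p i := [set w | left_nb part E (g2 p (far i)) w p m (far i)].
Definition new_right_nbs p r := right_nbs r p :\: \bigcup_(j < p) right_nbs r j.
Definition new_left_nbs p r := left_nbs p r :\: \bigcup_(i < r) left_nbs p i.

Lemma sum_new_right_nbs r :
  \sum_(p < m) #|new_right_nbs p r| <= #|Vpart part m (far r)|.
Proof.
rewrite (sum_card_setD_bigcup (right_nbs r)).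
apply/subset_leq_card/subsetP => w /bigcupP[j _]; rewrite inE.
exact: right_nb_Vpart.
Qed.

Lemma sum_new_left_nbs p :
  \sum_(r < m) #|new_left_nbs p r| <= #|Vpart part p m|.
Proof.
rewrite (sum_card_setD_bigcup (left_nbs p)).
apply/subset_leq_card/subsetP => w /bigcupP[i _]; rewrite inE.
exact: left_nb_Vpart.
Qed.

Variables p r : nat.
Hypotheses (p_lt_m : p < m) (r_lt_m : r < m).
Local Notation s := (index_seq p m r).

Definition gamma_consistent (e : {set T}) : bool :=
  ((g1 p (far r) \in e) ==>
     (e :&: Vpart part m (far r) \subset \bigcup_(j < p) right_nbs r j)) &&
  ((g2 p (far r) \in e) ==>
     (e :&: Vpart part p m \subset \bigcup_(i < r) left_nbs p i)).

Definition pruned : {set {set T}} :=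
  [set e in E | within_index part s e &&
                (triadb part e p m (far r) ==> gamma_consistent e)].

Lemma pruned_sub : pruned \subset E.
Proof. by apply/subsetP => e; rewrite inE => /andP[]. Qed.

Lemma subhypergraph_pruned : subhypergraph part s E pruned.
Proof.
split; first exact: pruned_sub.
by move=> e; rewrite inE => /and3P[_ /within_indexP].
Qed.

Lemma pruned_off_special e a b c :
  a \in s -> b \in s -> c \in s -> (a, b, c) != (p, m, far r) ->
  e \in E -> triadb part e a b c -> e \in pruned.
Proof.
move=> aS bS cS abc eE te; rewrite inE eE /=; apply/andP; split.
  by apply/within_indexP; exists a, b, c.
by apply/implyP => /(triad_indices_uniq te) abcE; rewrite abcE eqxx in abc.
Qed.

Lemma special_triad_within e : triadb part e p m (far r) -> within_index part s e.
Proof.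
move=> te; apply/within_indexP; exists p, m, (far r).
by rewrite !mem_index_seq //; split=> //; lia.
Qed.

Lemma card_pruned_through v : v \in Vpart part p (far r) ->
  #|[set e in E :\: pruned | (v \in e) && triadb part e p m (far r)]|
    <= #|Vpart part p m| * #|new_right_nbs p r|
       + #|new_left_nbs p r| * #|Vpart part m (far r)|.
Proof.
rewrite inE => /eqP pv.
apply: leq_trans (leq_add (card_triad_edges_through m (Vpart part p m)
                             (new_right_nbs p r) pv)
                          (card_triad_edges_through m (new_left_nbs p r)
                             (Vpart part m (far r)) pv)).
apply: leq_trans (leq_card_setU _ _); apply/subset_leq_card/subsetP => e.
rewrite !inE => /andP[/andP[e_notin eE] /andP[ve te]].
rewrite ve te !subsetIr /= andbT.
have /and5P[_ _ _ /cards1P[x ex] /andP[_ /cards1P[y ey]]] := te.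
have [xe xV] : x \in e /\ x \in Vpart part p m.
  by apply/andP; rewrite -in_setI ex set11.
have [ye yV] : y \in e /\ y \in Vpart part m (far r).
  by apply/andP; rewrite -in_setI ey set11.
move: e_notin; rewrite eE special_triad_within // te /= negb_and !negb_imply.
rewrite ex ey !sub1set !inE => /orP[/andP[g1e y_new] | /andP[g2e x_new]].
- by rewrite y_new /=; apply/orP; left; apply/exists_inP; exists e; rewrite ?te ?g1e ?ye.
- by apply/orP; right; rewrite x_new /=; apply/exists_inP; exists e; rewrite ?te ?g2e ?xe.
Qed.

Lemma deg_pruned (R : realType) (c : R) v : (0 <= c)%R ->
  (#|new_right_nbs p r|%:R <= c * #|Vpart part m (far r)|%:R)%R ->
  (#|new_left_nbs p r|%:R <= c * #|Vpart part p m|%:R)%R ->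
  v \in Vpart part p (far r) ->
  (deg part E v p m (far r) - deg part pruned v p m (far r) <= 2 * c)%R.
Proof.
move=> c_ge0 right_small left_small vV.
apply: le_trans (deg_diff_le R pruned_sub (card_pruned_through vV)) _.
by rewrite natrD !natrM cross_sum_div_le.
Qed.

Lemma right_nb_pruned w :
  right_nb part pruned (g1 p (far r)) w p m (far r) ->
  exists2 j, j < p & right_nb part pruned (g1 j (far r)) w j m (far r).
Proof.
case/exists_inP=> e e_pruned /and4P[te g1e we wV].
move: e_pruned; rewrite inE te /= => /and3P[_ _ /andP[/implyP/(_ g1e) e_sub _]].
have /bigcupP[j _] : w \in \bigcup_(j < p) right_nbs r j.
  by apply: (subsetP e_sub); rewrite inE we.
rewrite inE => w_nb; exists j => //; apply: right_nb_sub w_nb => e' e'E te'.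
have j_lt_p := ltn_ord j.
apply: (pruned_off_special _ _ _ _ e'E te'); rewrite ?mem_index_seq //; try lia.
by apply/eqP => -[]; lia.
Qed.

Lemma left_nb_pruned w :
  left_nb part pruned (g2 p (far r)) w p m (far r) ->
  exists2 i, i < r & left_nb part pruned (g2 p (far i)) w p m (far i).
Proof.
case/exists_inP=> e e_pruned /and4P[te g2e we wV].
move: e_pruned; rewrite inE te /= => /and3P[_ _ /andP[_ /implyP/(_ g2e) e_sub]].
have /bigcupP[i _] : w \in \bigcup_(i < r) left_nbs p i.
  by apply: (subsetP e_sub); rewrite inE we.
rewrite inE => w_nb; exists i => //; apply: left_nb_sub w_nb => e' e'E te'.
have i_lt_r := ltn_ord i.
apply: (pruned_off_special _ _ _ _ e'E te'); rewrite ?mem_index_seq //; try lia.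
by apply/eqP => -[]; lia.
Qed.
End Pruning.

Local Open Scope ring_scope.

Theorem lemma5p8 (R : realType) (eps : R) :
  0 < eps ->
  exists N : nat,
  forall (T : finType) (part : T -> nat * nat) (E : {set {set T}})
         (g1 g2 : nat -> nat -> T),
  partitioned_hypergraph part N E ->
  (forall i j, (i < j < N)%N ->
     g1 i j \in Vpart part i j /\ g2 i j \in Vpart part i j) ->
  exists (s : seq nat) (k : nat) (E0 : {set {set T}}),
  [/\ sorted ltn s, all (fun i => (i < N)%N) s, (k + 2 < size s)%N &
      subhypergraph part s E E0] /\
  [/\
      (forall a b c, a \in s -> b \in s -> c \in s ->
         (a, b, c) != (nth 0%N s k, nth 0%N s k.+1, nth 0%N s k.+2) ->
         forall e, (e \in E0) && triadb part e a b c =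
                   (e \in E) && triadb part e a b c),
      (* (b) *)
      (forall v, v \in Vpart part (nth 0%N s k) (nth 0%N s k.+2) ->
         deg part E v (nth 0%N s k) (nth 0%N s k.+1) (nth 0%N s k.+2)
         - deg part E0 v (nth 0%N s k) (nth 0%N s k.+1) (nth 0%N s k.+2)
         <= eps),
      (* (c) *)
      (forall w, right_nb part E0 (g1 (nth 0%N s k) (nth 0%N s k.+2)) w
                   (nth 0%N s k) (nth 0%N s k.+1) (nth 0%N s k.+2) ->
         exists2 j, (j < k)%N &
           right_nb part E0 (g1 (nth 0%N s j) (nth 0%N s k.+2)) w
                   (nth 0%N s j) (nth 0%N s k.+1) (nth 0%N s k.+2)) &
      (* (d) *)
      (forall w, left_nb part E0 (g2 (nth 0%N s k) (nth 0%N s k.+2)) w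
                   (nth 0%N s k) (nth 0%N s k.+1) (nth 0%N s k.+2) ->
         exists2 j, (k.+2 < j < size s)%N &
           left_nb part E0 (g2 (nth 0%N s k) (nth 0%N s j)) w
                   (nth 0%N s k) (nth 0%N s k.+1) (nth 0%N s j))].
Proof.
move=> eps_gt0; pose c := eps / 2; have c_gt0 : 0 < c by rewrite divr_gt0.
pose t := Num.Def.archi_bound c^-1.
have ct : 1 <= c * t%:R.
  rewrite -ler_pdivrMl // mulr1; apply/ltW/archi_boundP.
  by rewrite invr_ge0 ltW.
pose m := (2 * t).+1; exists (2 * m).+1 => T part E g1 g2 _ _.
have [p [r /andP[]]] := exists_pair_avoiding (ltnSn (2 * t))
  (fun r => markov_card c_gt0 ct (sum_new_right_nbs part E g1 m r))
  (fun p => markov_card c_gt0 ct (sum_new_left_nbs part E g2 m p)).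
rewrite -!leNgt => right_small left_small.
have [p_lt_m r_lt_m] : (p < m)%N /\ (r < m)%N by [].
exists (index_seq p m r), p, (pruned part E g1 g2 m p r).
rewrite nth_index_seq_lo // nth_index_seq_mid nth_index_seq_top //.
split; first split.
- exact: index_seq_sorted.
- exact: index_seq_bounded.
- by rewrite size_index_seq; lia.
- exact: subhypergraph_pruned.
split.
- move=> a b c' aS bS cS abc e; apply/andP/andP => -[eE te]; split=> //.
    exact: (subsetP (pruned_sub part E g1 g2 m p r)).
  exact: (pruned_off_special g1 g2 aS bS cS abc eE te).
- move=> v vV; have -> : eps = 2 * c by rewrite /c mulrC divfK // pnatr_eq0.
  exact: (deg_pruned _ _ (ltW c_gt0) right_small left_small vV).
- move=> w /(right_nb_pruned p_lt_m r_lt_m)[j j_lt_p w_nb]; exists j => //.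
  by rewrite nth_index_seq_lo // ltnW.
- move=> w /(left_nb_pruned p_lt_m r_lt_m)[i i_lt_r w_nb]; exists (p.+2 + (r - i))%N.
    by rewrite size_index_seq; lia.
  by rewrite nth_index_seq_hi // ltnW.
Qed.
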